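(* Let $A\in\mathbb{R}^{n\times n}$, $B\in\mathbb{R}^{n\times r}$, and shifts $\alpha_1,\ldots,\alpha_j\in\mathbb{C}$ with $\mathrm{Re}(\alpha_i)<0$ and $A+\alpha_iI$ nonsingular. Let $w_i$ ($0\le i\le j$) be the residual factors of the inexact LR-ADI iteration with $M=I$ described in the context, with linear-system residuals $s_i$, and let $w^{\mathrm{exact}}_j:=\Big[\prod_{k=1}^{j}\mathcal{C}_k\Big]B$ be the residual factor of the exact LR-ADI iteration (all $s_i=0$). Then $$w_j=w^{\mathrm{exact}}_j-\sum_{i=1}^{j}\Big[\prod_{k=i+1}^{j}\mathcal{C}_k\Big](\mathcal{C}_i-I)s_i.$$
   Context: $\mathcal{C}_k:=(A+\alpha_kI)^{-1}(A-\overline{\alpha_k}I)$ (these matrices commute with each other); products $\prod_{k=i+1}^{j}\mathcal{C}_k=\mathcal{C}_j\cdots\mathcal{C}_{i+1}$, empty product $=I$. Inexact LR-ADI with $M=I$: $w_0:=B$, $\gamma_i:=\sqrt{-2\,\mathrm{Re}(\alpha_i)}$; $v_i$ arbitrary with $s_i:=w_{i-1}-(A+\alpha_iI)v_i$, and $w_i:=w_{i-1}+\gamma_i^2v_i$. *)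

From HB Require Import structures.
From mathcomp Require Import all_boot all_order all_algebra.
From mathcomp Require Import complex.
Set Implicit Arguments. Unset Strict Implicit. Unset Printing Implicit Defensive.
Import Order.TTheory GRing.Theory Num.Theory.
Local Open Scope ring_scope.

(* Complex numbers: R[i] = complex R for a real closed field R (e.g. the reals).
   Shifts are indexed by nat; only alpha 1, ..., alpha j are used. *)

Definition cmx (R : rcfType) (m p : nat) (M : 'M[R]_(m, p)) : 'M[R[i]]_(m, p) :=
  map_mx (fun x => x%:C%C) M.

Definition Cay (R : rcfType) (n : nat) (A : 'M[R[i]]_n) (alpha : nat -> R[i]) (k : nat)
  : 'M[R[i]]_n :=
  invmx (A + (alpha k)%:M) *m (A - ((alpha k)^*)%C%:M).

(* prod_{k=i+1}^{j} C_k = C_j ... C_{i+1}; empty product (j <= i) = I *)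
Fixpoint Cprod (R : rcfType) (n : nat) (A : 'M[R[i]]_n) (alpha : nat -> R[i])
  (i j : nat) : 'M[R[i]]_n :=
  match j with
  | 0 => 1%:M
  | j'.+1 => if (i < j)%N then Cay A alpha j *m Cprod A alpha i j' else 1%:M
  end.

Definition gamma (R : rcfType) (alpha : nat -> R[i]) (i : nat) : R[i] :=
  (Num.sqrt (- 2 * complex.Re (alpha i)))%:C%C.

Fixpoint wres (R : rcfType) (n r : nat) (B : 'M[R[i]]_(n, r)) (alpha : nat -> R[i])
  (v : nat -> 'M[R[i]]_(n, r)) (i : nat) : 'M[R[i]]_(n, r) :=
  match i with
  | 0 => B
  | i'.+1 => wres B alpha v i' + (gamma alpha i ^+ 2) *: v i
  end.

Definition sres (R : rcfType) (n r : nat) (A : 'M[R[i]]_n) (B : 'M[R[i]]_(n, r))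
  (alpha : nat -> R[i]) (v : nat -> 'M[R[i]]_(n, r)) (i : nat) : 'M[R[i]]_(n, r) :=
  wres B alpha v i.-1 - (A + (alpha i)%:M) *m v i.

From HB Require Import structures.
From mathcomp Require Import all_boot all_order all_algebra.
From mathcomp Require Import complex ring lra.
Import Order.TTheory GRing.Theory Num.Theory.
Local Open Scope ring_scope.

(* One LR-ADI step with residual s_k reads w_k = C_k w_{k-1} - (C_k - I) s_k,
   because C_k - I = gamma_k^2 (A + alpha_k I)^{-1}.  Unrolling this affine
   recurrence (discrete variation of constants) gives the formula. *)

Section CayleyProducts.

Variables (R : rcfType) (n : nat) (A : 'M[R[i]]_n) (alpha : nat -> R[i]).

Lemma Cprodnn k : Cprod A alpha k k = 1%:M.
Proof. by case: k => //= k; rewrite ltnn. Qed.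

Lemma CprodSr i k : (i <= k)%N ->
  Cprod A alpha i k.+1 = Cay A alpha k.+1 *m Cprod A alpha i k.
Proof. by move=> ik /=; rewrite ltnS ik. Qed.

Lemma Cay_sub1 k : A + (alpha k)%:M \in unitmx ->
  Cay A alpha k - 1%:M = - (alpha k + (alpha k)^*)%C *: invmx (A + (alpha k)%:M).
Proof.
move=> Munit; rewrite /Cay.
have -> : A - ((alpha k)^*)%C%:M = A + (alpha k)%:M - (alpha k + (alpha k)^*)%C%:M.
  by rewrite raddfD /= opprD addrA addrK.
by rewrite mulmxBr mulVmx // mul_mx_scalar addrC addKr scaleNr.
Qed.

Lemma variation_of_constants r j (w : nat -> 'M[R[i]]_(n, r)) s :
  (forall k, (1 <= k <= j)%N ->
     w k = Cay A alpha k *m w k.-1 - (Cay A alpha k - 1%:M) *m s k) ->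
  w j = Cprod A alpha 0 j *m w 0
        - \sum_(1 <= k < j.+1)
            Cprod A alpha k j *m (Cay A alpha k - 1%:M) *m s k.
Proof.
elim: j => [|j IH] rec; first by rewrite big_geq // subr0 mul1mx.
rewrite rec ?leqnn // IH => [|k /andP[k1 kj]]; last by rewrite rec // k1 ltnW.
rewrite [in RHS]big_nat_recr // Cprodnn mul1mx CprodSr //.
rewrite mulmxBr !mulmxA opprD addrA.
congr (_ - _ - _); rewrite mulmx_sumr; apply: eq_big_nat => k /andP[_ kj].
by rewrite CprodSr // !mulmxA.
Qed.

End CayleyProducts.

Lemma gamma_sqr (R : rcfType) (alpha : nat -> R[i]) k :
  complex.Re (alpha k) <= 0 -> gamma alpha k ^+ 2 = - (alpha k + (alpha k)^*)%C.
Proof.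
rewrite /gamma; case: (alpha k) => a b /= a_le0.
rewrite -rmorphXn /= sqr_sqrtr; last by lra.
by apply/eqP; rewrite eq_complex /=; apply/andP; split; apply/eqP; ring.
Qed.

Lemma wres_step (R : rcfType) n r (A : 'M[R[i]]_n) (B : 'M[R[i]]_(n, r)) alpha v k :
  complex.Re (alpha k) <= 0 -> A + (alpha k)%:M \in unitmx -> (0 < k)%N ->
  wres B alpha v k = Cay A alpha k *m wres B alpha v k.-1
                     - (Cay A alpha k - 1%:M) *m sres A B alpha v k.
Proof.
case: k => // k Re_le0 Munit _.
have C1_shift : (Cay A alpha k.+1 - 1%:M) *m ((A + (alpha k.+1)%:M) *m v k.+1)
                = gamma alpha k.+1 ^+ 2 *: v k.+1.
  by rewrite Cay_sub1 // -gamma_sqr // -scalemxAl mulmxA mulVmx // mul1mx.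
by rewrite /sres /= mulmxBr C1_shift opprB addrA addrAC -mulmxBl subKr mul1mx.
Qed.

Theorem lemma3p4 (R : rcfType) (n r j : nat) (A : 'M[R]_n) (B : 'M[R]_(n, r))
  (alpha : nat -> R[i]) (v : nat -> 'M[R[i]]_(n, r)) :
  (forall k, (1 <= k <= j)%N -> complex.Re (alpha k) < 0) ->
  (forall k, (1 <= k <= j)%N -> cmx A + (alpha k)%:M \in unitmx) ->
  wres (cmx B) alpha v j =
    Cprod (cmx A) alpha 0 j *m cmx B
    - \sum_(1 <= k < j.+1)
        Cprod (cmx A) alpha k j *m (Cay (cmx A) alpha k - 1%:M)
          *m sres (cmx A) (cmx B) alpha v k.
Proof.
move=> Re_lt0 Munit.
apply: (@variation_of_constants _ _ _ _ _ _ (wres (cmx B) alpha v)) => k k1j.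
by apply: wres_step; rewrite ?ltW ?Re_lt0 ?Munit //; case/andP: k1j.
Qed.
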